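(* For every $s\in\{1,\dots,n-1\}$, every $A\in M_{s+1,n-s}(\mathbb R)$ and every $\mathbf w\in\mathcal S_{n+1,n}$, one has $\max_{I\ni0,\,|I|=n}\|\mathbf c^+_{I,\mathbf w}+A\mathbf c^-_{I,\mathbf w}\|\ge1$.
   Context: Sup-norms. Let $\mathbf e_0,\dots,\mathbf e_n$ be the standard basis of $\mathbb R^{n+1}$, $\mathbf e_I=\mathbf e_{i_1}\wedge\dots\wedge\mathbf e_{i_j}$ for $I=\{i_1<\dots<i_j\}\subset\{0,\dots,n\}$, and write $\mathbf w\in\bigwedge^j\mathbb R^{n+1}$ as $\sum_{|I|=j}w_I\mathbf e_I$. $\mathcal S_{n+1,j}$ is the set of elements $\mathbf v_1\wedge\dots\wedge\mathbf v_j$ with $\mathbf v_1,\dots,\mathbf v_j$ a basis of a rank-$j$ subgroup of $\mathbb Z^{n+1}$. For $I\ni0$, $i\notin I$, $l(I,i)$ is the number of elements of $I$ strictly between $0$ and $i$. For $I\ni0$, $|I|=j$: $\mathbf c_{I,\mathbf w}=w_I\mathbf e_0+\sum_{i\in\{1,\dots,n\}\setminus I}(-1)^{l(I,i)}w_{I\cup\{i\}\setminus\{0\}}\mathbf e_i$; $\mathbf c^+_{I,\mathbf w}\in\mathbb R^{s+1}$ is its vector of coordinates $0,\dots,s$ and $\mathbf c^-_{I,\mathbf w}\in\mathbb R^{n-s}$ its vector of coordinates $s+1,\dots,n$. *)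

From HB Require Import structures.
From mathcomp Require Import all_boot all_order all_algebra.
From mathcomp Require Import reals.
Set Implicit Arguments. Unset Strict Implicit. Unset Printing Implicit Defensive.
Import Order.TTheory GRing.Theory Num.Theory.
Local Open Scope ring_scope.

(* The j x j submatrix of M : 'M_(n+1, j) made of the rows in I
   (in increasing order; enum of a set of ordinals is increasing). *)
Definition row_minor (R : ringType) (n j : nat) (M : 'M[R]_(n.+1, j))
  (I : {set 'I_n.+1}) : 'M[R]_j :=
  \matrix_(a < j, b < j) M (nth ord0 (enum I) a) b.

(* Coordinate w_I of v_1 /\ ... /\ v_j, where v_k is the k-th column of M. *)
Definition wedge_coord (R : comRingType) (n j : nat) (M : 'M[R]_(n.+1, j))
  (I : {set 'I_n.+1}) : R := \det (row_minor M I).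

(* w (given by its coordinates w_I, |I| = j) lies in S_{n+1,j}: it is
   v_1 /\ ... /\ v_j with v_1..v_j in Z^{n+1} a basis of a rank-j subgroup,
   i.e. integer vectors that are linearly independent. *)
Definition in_S (R : realType) (n j : nat) (w : {set 'I_n.+1} -> R) : Prop :=
  exists M : 'M[int]_(n.+1, j),
    \rank (map_mx (fun z : int => z%:~R : R) M)^T = j /\
    forall I : {set 'I_n.+1}, #|I| = j ->
      w I = wedge_coord (map_mx (fun z : int => z%:~R : R) M) I.

Definition lI (n : nat) (I : {set 'I_n.+1}) (i : 'I_n.+1) : nat :=
  #|[set k in I | (0 < val k < val i)%N]|.

Definition cvec (R : realType) (n : nat) (w : {set 'I_n.+1} -> R)
  (I : {set 'I_n.+1}) : 'cV[R]_n.+1 :=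
  \col_(i < n.+1)
    (if val i == 0%N then w I
     else if i \notin I then (-1) ^+ lI I i * w ((I :|: [set i]) :\ ord0)
     else 0).

Definition cplus (R : realType) (n s : nat) (c : 'cV[R]_n.+1) : 'cV[R]_s.+1 :=
  \col_(i < s.+1) c (inord (val i)) ord0.
Definition cminus (R : realType) (n s : nat) (c : 'cV[R]_n.+1) : 'cV[R]_(n - s) :=
  \col_(i < n - s) c (inord (s.+1 + val i)) ord0.

Definition supnorm (R : realType) (m : nat) (x : 'cV[R]_m) : R :=
  \big[Num.max/0]_(i < m) `|x i ord0|.

(* The coordinates of [w] are integers and not all zero, so any nonzero one
   has absolute value at least 1.  Take I containing 0 with |I| = n: the
   coordinate i > 0 of c_{I,w} vanishes when i is in I and equals
   ±w_{1..n} otherwise.  If w_{1..n} = 0, choose I with w_I <> 0; then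
   c_{I,w} = w_I e_0, so c^- = 0 and |c^+_0| >= 1.  If w_{1..n} <> 0,
   choose I = {0,...,n} \ {1}; then c^- = 0 again and |c^+_1| >= 1.  In both
   cases c^+ + A c^- = c^+ has sup-norm at least 1, whatever A is. *)

From HB Require Import structures.
From mathcomp Require Import all_boot all_order all_algebra.
From mathcomp Require Import reals.
Set Implicit Arguments. Unset Strict Implicit. Unset Printing Implicit Defensive.
Import Order.TTheory GRing.Theory Num.Theory.
Local Open Scope ring_scope.

Section WedgeCoordinates.

Variables (R : realType) (n j : nat) (w : {set 'I_n.+1} -> R).
Hypothesis w_in_S : in_S j w.

Lemma in_S_int (I : {set 'I_n.+1}) : #|I| = j -> w I \is a Num.int.
Proof.
case: w_in_S => M [_ wE] cardI; rewrite wE // /wedge_coord.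
have -> : row_minor (map_mx (fun z : int => z%:~R : R) M) I =
          map_mx ( *~%R (1 : R)) (row_minor M I).
  by apply/matrixP => a b; rewrite !mxE.
by rewrite det_map_mx intr_int.
Qed.

(* A maximal free family of rows of the rank-[j] matrix of the [v_k] spans
   a [j]-dimensional space, so the corresponding minor is invertible. *)
Lemma in_S_neq0 : exists2 I : {set 'I_n.+1}, #|I| = j & w I != 0.
Proof.
case: w_in_S => M [rankM wE]; set MR := map_mx _ M in rankM wE.
have {rankM} rankMR : \rank MR = j by rewrite -mxrank_tr.
pose I := [set maxrankfun MR k | k : 'I_(\rank MR)].
have cardI : #|I| = j.
  by rewrite card_imset ?card_ord //; apply: maxrankfun_inj.
exists I => //; rewrite wE // /wedge_coord -unitfE -unitmxE -row_free_unit.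
have sub_minor : (rowsub (maxrankfun MR) MR <= row_minor MR I)%MS.
  apply/row_subP => k; rewrite row_rowsub.
  have gk_in : maxrankfun MR k \in enum I by rewrite mem_enum imset_f.
  have idx_lt : (index (maxrankfun MR k) (enum I) < j)%N.
    by rewrite -[X in (_ < X)%N]cardI cardE index_mem.
  have -> : row (maxrankfun MR k) MR = row (Ordinal idx_lt) (row_minor MR I).
    by apply/rowP => b; rewrite !mxE /= nth_index.
  exact: row_sub.
rewrite /row_free eqn_leq rank_leq_row -{1}rankMR.
by rewrite -(eqP (maxrowsub_free MR)) mxrankS.
Qed.

Lemma in_S_norm_ge1 (I : {set 'I_n.+1}) : #|I| = j -> w I != 0 -> 1 <= `|w I|.
Proof. by move=> cardI; apply/norm_intr_ge1/in_S_int. Qed.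

End WedgeCoordinates.

Lemma setC1_card_eq (T : finType) (A : {set T}) (x : T) :
  #|A| = #|T|.-1 -> x \notin A -> A = [set~ x].
Proof.
move=> cardA xA; apply/eqP; rewrite eqEcard cardsC1 cardA leqnn andbT.
by apply/subsetP => y yA; rewrite !inE; apply: contraNneq xA => <-.
Qed.

Section CVector.

Variables (R : realType) (n : nat) (w : {set 'I_n.+1} -> R) (I : {set 'I_n.+1}).
Hypotheses (I0 : ord0 \in I) (cardI : #|I| = n).

Lemma setU1_setD0 (i : 'I_n.+1) : i \notin I -> (I :|: [set i]) :\ ord0 = [set~ ord0].
Proof.
move=> iI; apply: setC1_card_eq; last by rewrite !inE eqxx.
have := cardsD1 ord0 (I :|: [set i]).
by rewrite setUC cardsU1 iI cardI !inE I0 orbT card_ord => /addnI <-.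
Qed.

Lemma norm_cvec (i : 'I_n.+1) :
  `|cvec w I i ord0| =
    if i == ord0 then `|w I| else if i \in I then 0 else `|w [set~ ord0]|.
Proof.
rewrite mxE -[val i == 0%N]/(i == ord0).
case: eqP => // _; have [iI | iI] := boolP (i \in I); first by rewrite normr0.
by rewrite setU1_setD0 // normrM normrX normrN1 expr1n mul1r.
Qed.

Lemma cvec_eq0 (k : 'I_n.+1) :
  k != ord0 -> (k \in I) || (w [set~ ord0] == 0) -> cvec w I k ord0 = 0.
Proof.
move=> k0 kI_or_w0; apply/eqP; rewrite -normr_eq0 norm_cvec (negbTE k0).
by case: ifP kI_or_w0 => //= _; rewrite normr_eq0.
Qed.

End CVector.

Lemma cminus_eq0 (R : realType) (n s : nat) (c : 'cV[R]_n.+1) :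
  (forall i : 'I_n.+1, (s < i)%N -> c i ord0 = 0) -> cminus s c = 0.
Proof.
move=> c_tail; apply/colP => i.
have lt_si : (s.+1 + i < n.+1)%N by rewrite addSn ltnS -ltn_subRL.
by rewrite !mxE c_tail // inordK // addSn ltnS leq_addr.
Qed.

Lemma supnorm_ge (R : realType) (m : nat) (x : 'cV[R]_m) (i : 'I_m) :
  `|x i ord0| <= supnorm x.
Proof. exact: (bigmax_sup i). Qed.

Lemma supnorm_cplus_ge (R : realType) (n s : nat) (A : 'M[R]_(s.+1, n - s))
    (c : 'cV[R]_n.+1) (i : 'I_n.+1) :
  (i <= s)%N -> (forall k : 'I_n.+1, (s < k)%N -> c k ord0 = 0) ->
  `|c i ord0| <= supnorm (cplus s c + A *m cminus s c).
Proof.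
move=> le_is c_tail; rewrite cminus_eq0 // mulmx0 addr0.
have lt_is : (i < s.+1)%N by [].
apply: le_trans (supnorm_ge _ (Ordinal lt_is)).
by rewrite mxE /= inord_val.
Qed.

Lemma cvec_le_bigmax_supnorm (R : realType) (n s : nat) (A : 'M[R]_(s.+1, n - s))
    (w : {set 'I_n.+1} -> R) (I : {set 'I_n.+1}) (i : 'I_n.+1) :
  ord0 \in I -> #|I| = n -> (i <= s)%N ->
  (forall k : 'I_n.+1, (s < k)%N -> (k \in I) || (w [set~ ord0] == 0)) ->
  `|cvec w I i ord0| <=
    \big[Num.max/0]_(J : {set 'I_n.+1} | (ord0 \in J) && (#|J| == n))
      supnorm (cplus s (cvec w J) + A *m cminus s (cvec w J)).
Proof.
move=> I0 cardI le_is tail; apply: (bigmax_sup I); first by rewrite I0 cardI eqxx.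
apply: supnorm_cplus_ge => // k lt_sk; apply: (cvec_eq0 I0 cardI); last exact: tail.
by apply/eqP => k0; rewrite k0 in lt_sk.
Qed.

Theorem lemma4p5 (R : realType) (n s : nat) (hs1 : (1 <= s)%N) (hs2 : (s <= n - 1)%N)
  (A : 'M[R]_(s.+1, n - s)) (w : {set 'I_n.+1} -> R) (hw : in_S n w) :
  1 <= \big[Num.max/0]_(I : {set 'I_n.+1} | (ord0 \in I) && (#|I| == n))
         supnorm (cplus s (cvec w I) + A *m cminus s (cvec w I)).
Proof.
have [wJ0 | wJ0] := eqVneq (w [set~ ord0]) 0.
- have [I cardI wI] := in_S_neq0 hw.
  have I0 : ord0 \in I.
    apply: contraTT wI => I0.
    by rewrite (setC1_card_eq _ I0) ?wJ0 ?eqxx // cardI card_ord.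
  apply: le_trans (cvec_le_bigmax_supnorm (i := ord0) A I0 cardI (leq0n s) _).
    by rewrite norm_cvec // eqxx (in_S_norm_ge1 hw).
  by move=> k _; rewrite wJ0 eqxx orbT.
- pose k1 : 'I_n.+1 := inord 1.
  have k1E : k1 = 1%N :> nat.
    by rewrite /k1 inordK // ltnS (leq_trans hs1) // (leq_trans hs2) ?leq_subr.
  have k1_neq0 : k1 != ord0 by apply/eqP => /(congr1 val) /=; rewrite k1E.
  have I0 : ord0 \in [set~ k1] by rewrite !inE eq_sym.
  have cardI : #|[set~ k1]| = n by rewrite cardsC1 card_ord.
  apply: le_trans (cvec_le_bigmax_supnorm (i := k1) A I0 cardI _ _).
  + rewrite norm_cvec // (negbTE k1_neq0) !inE eqxx /=.
    by apply: (in_S_norm_ge1 hw); rewrite // cardsC1 card_ord.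
  + by rewrite k1E.
  + move=> k lt_sk; rewrite !inE; apply/orP; left.
    apply/eqP => /(congr1 val) /=; rewrite k1E => kE.
    by move: lt_sk; rewrite kE ltnNge hs1.
Qed.
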